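(* Let $B\in\mathbb{R}^{n\times n}$ be strictly diagonally row-dominant with positive diagonal entries and negative off-diagonal entries, $M=B^{-1}$, $P,R$ diagonal with strictly positive diagonal entries, $\beta>0$, and $w\in\mathbb{R}^n$. Assume (A1) $\displaystyle\max_i \frac{M_i w-1}{M_i\mathbf{1}} < \min_j \frac{M_j w+1}{M_j\mathbf{1}}$, and (A2) either $\mathrm{dz}(Mw)=0$, or the set $\mathcal{K}=\arg\max_i \left|\frac{\mathrm{dz}(M_i w)}{M_i\mathbf{1}}\right|$ is a singleton $\{k\}$. Then the closed-loop system $$\dot x=-x+B\,\mathrm{sat}(u)+w,\qquad \dot z=x+\beta\mathbf{1}\mathbf{1}^T\mathrm{dz}(u),\qquad u=-Px-Rz$$ has a unique equilibrium $(x^0,z^0)$, namely the one with $z^0=-R^{-1}(u^0+Px^0)$ and $$x^0=\mathbf{1}\,\frac{\mathrm{dz}(M_k w)}{M_k\mathbf{1}},\qquad u^0_k=-\mathrm{sat}(M_k w)-\frac{\mathrm{dz}(M_k w)}{\beta M_k\mathbf{1}},\qquad u^0_i=-M_i w+\frac{M_i\mathbf{1}}{M_k\mathbf{1}}\mathrm{dz}(M_k w)\ \ (i\neq k),$$ where $k\in\mathcal{K}$ (in the case $\mathrm{dz}(Mw)=0$ this gives $x^0=0$, $u^0=-Mw$ for any choice of $k$).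
   Context: $\mathbf{1}$ denotes the all-ones column vector in $\mathbb{R}^n$; $A_i$ denotes the $i$-th row of a matrix $A$. $\mathrm{sat}(v)=\max(\min(v,1),-1)$ and $\mathrm{dz}(v)=v-\mathrm{sat}(v)$, applied componentwise. An equilibrium is a pair $(x^0,z^0)$ with $u^0=-Px^0-Rz^0$ satisfying $0=-x^0+B\,\mathrm{sat}(u^0)+w$ and $0=x^0+\beta\mathbf{1}\mathbf{1}^T\mathrm{dz}(u^0)$. Under the hypotheses on $B$, $M=B^{-1}$ is entrywise nonnegative and $M_i\mathbf{1}>0$ for all $i$. *)

From HB Require Import structures.
From mathcomp Require Import all_boot all_order all_algebra.
Set Implicit Arguments. Unset Strict Implicit. Unset Printing Implicit Defensive.
Import Order.TTheory GRing.Theory Num.Theory.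
Local Open Scope ring_scope.

Definition satr {F : realFieldType} (v : F) : F := Num.max (Num.min v 1) (-1).
Definition dzr {F : realFieldType} (v : F) : F := v - satr v.

Definition sat {F : realFieldType} {n : nat} (v : 'cV[F]_n) : 'cV[F]_n := map_mx satr v.
Definition dz {F : realFieldType} {n : nat} (v : 'cV[F]_n) : 'cV[F]_n := map_mx dzr v.

Definition ones {F : realFieldType} (n : nat) : 'cV[F]_n := const_mx 1.

Definition rowdot {F : realFieldType} {n : nat} (M : 'M[F]_n) (v : 'cV[F]_n) (i : 'I_n) : F :=
  (M *m v) i 0.

Definition strictly_row_dominant {F : realFieldType} {n : nat} (B : 'M[F]_n) : Prop :=
  forall i : 'I_n, \sum_(j < n | j != i) `|B i j| < `|B i i|.

Definition is_equilibrium {F : realFieldType} {n : nat}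
  (B P R : 'M[F]_n) (beta : F) (w x z : 'cV[F]_n) : Prop :=
  let u := - (P *m x) - (R *m z) in
  0 = - x + B *m sat u + w /\
  0 = x + beta *: (ones n *m (ones n)^T *m dz u).

Definition argmaxK {F : realFieldType} {n : nat} (M : 'M[F]_n) (w : 'cV[F]_n) : {set 'I_n} :=
  [set i | [forall j, `|dzr (rowdot M w j) / rowdot M (ones n) j|
                        <= `|dzr (rowdot M w i) / rowdot M (ones n) i| ]].

Definition x0_of {F : realFieldType} {n : nat} (M : 'M[F]_n) (w : 'cV[F]_n) (k : 'I_n)
  : 'cV[F]_n :=
  dzr (rowdot M w k) / rowdot M (ones n) k *: ones n.

Definition u0_of {F : realFieldType} {n : nat} (M : 'M[F]_n) (beta : F) (w : 'cV[F]_n)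
  (k : 'I_n) : 'cV[F]_n :=
  \col_i (if i == k then
            - satr (rowdot M w k) - dzr (rowdot M w k) / (beta * rowdot M (ones n) k)
          else
            - rowdot M w i + rowdot M (ones n) i / rowdot M (ones n) k * dzr (rowdot M w k)).

Definition z0_of {F : realFieldType} {n : nat} (M P R : 'M[F]_n) (beta : F) (w : 'cV[F]_n)
  (k : 'I_n) : 'cV[F]_n :=
  - (invmx R *m (u0_of M beta w k + P *m x0_of M w k)).

From HB Require Import structures.
From mathcomp Require Import all_boot all_order all_algebra.
From mathcomp Require Import lra ring.
Import Order.TTheory GRing.Theory Num.Theory.
Local Open Scope ring_scope.

(* With M = B^-1, a_i = M_i w and m_i = M_i 1, an equilibrium (x, z) with input
   u = -Px - Rz is exactly: x = c 1 for a scalar level c, together with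
     sat(u_i) = c m_i - a_i  for all i   and   c = -beta sum_j dz(u_j)
   (the "reduced problem"), while z is recovered from u and x because R is
   invertible.  The admissible levels for index i form the box
   [(a_i - 1)/m_i, (a_i + 1)/m_i]; (A1) says all boxes overlap pairwise, and
   dz(a_i)/m_i is the point of box i closest to 0.  For k maximizing
   |dz(a_k)/m_k| this point lies in every box, which yields an explicit
   solution; conversely all active dead zones of a solution share one sign, pin
   c to an end of their box, and force c = dz(a_k)/m_k, and (A2) then leaves
   only index k with an active dead zone. *)

Lemma exists_argmax {T : finType} {F : realFieldType} (f : T -> F) (t0 : T) :
  exists i, forall j, f j <= f i.
Proof.
have [i _ fi_max] := @arg_maxP _ F T t0 predT f isT.
by exists i => j; apply: fi_max.
Qed.

Section RowDominance.
Context {F : realFieldType} {n : nat}.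

(* Levy-Desplanques: a strictly row-dominant matrix A has trivial kernel
   (stated for A^T acting on row vectors, the form used by kermx). *)
Lemma row_dominant_kernel (A : 'M[F]_n) (v : 'rV[F]_n) :
  strictly_row_dominant A -> v *m A^T = 0 -> v = 0.
Proof.
move=> dom vA0; apply/matrixP => r j; rewrite ord1 !mxE.
have [i vi_max] := exists_argmax (fun l => `|v 0 l|) j.
suff : `|v 0 i| <= 0.
  by move=> vi0; apply/normr0_eq0/le_anti; rewrite normr_ge0 andbT (le_trans (vi_max j)).
rewrite leNgt; apply/negP => vi_pos.
have row_i : \sum_l v 0 l * A i l = 0.
  transitivity ((v *m A^T) 0 i); last by rewrite vA0 mxE.
  by rewrite mxE; apply: eq_bigr => l _; rewrite mxE.
rewrite (bigD1 i) //= in row_i.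
have off_diag : `|A i i| * `|v 0 i| <= `|v 0 i| * \sum_(l < n | l != i) `|A i l|.
  have -> : `|A i i| * `|v 0 i| = `|\sum_(l < n | l != i) v 0 l * A i l|.
    by rewrite -normrM mulrC; move/eqP: row_i; rewrite addr_eq0 => /eqP ->; rewrite normrN.
  apply: (le_trans (ler_norm_sum _ _ _)); rewrite mulr_sumr; apply: ler_sum => l _.
  by rewrite normrM ler_wpM2r.
have := dom i; rewrite -(ltr_pM2l vi_pos) [X in _ < X]mulrC => diag_big.
by have := le_lt_trans off_diag diag_big; rewrite ltxx.
Qed.

Lemma row_dominant_unit {A : 'M[F]_n} : strictly_row_dominant A -> A \in unitmx.
Proof.
move=> dom; rewrite -unitmx_tr -row_free_unit -kermx_eq0 -submx0.
apply/row_subP => i; rewrite (row_dominant_kernel A (row i (kermx A^T)) dom) ?sub0mx //.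
by apply/sub_kermxP; exact: row_sub.
Qed.

Lemma pos_diag_row_dominant {D : 'M[F]_n} :
  is_diag_mx D -> (forall i, 0 < D i i) -> strictly_row_dominant D.
Proof.
move=> /is_diag_mxP diagD posD i; rewrite big1 ?gtr0_norm // => j ji.
by rewrite diagD ?normr0 // eq_sym.
Qed.

Section ZMatrix.
Context {B : 'M[F]_n}.
Hypothesis dom : strictly_row_dominant B.
Hypothesis diag_pos : forall i, 0 < B i i.
Hypothesis offdiag_neg : forall i j, i != j -> B i j < 0.

Lemma Zmatrix_row_sum_pos i : 0 < B i i + \sum_(l < n | l != i) B i l.
Proof.
have := dom i; rewrite gtr0_norm // -subr_gt0 => gap.
suff -> : \sum_(l < n | l != i) B i l = - \sum_(l < n | l != i) `|B i l| by [].
rewrite -sumrN; apply: eq_bigr => l li; rewrite ltr0_norm ?opprK //.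
by apply: offdiag_neg; rewrite eq_sym.
Qed.

Lemma Zmatrix_inv_ones_pos i : 0 < rowdot (invmx B) (ones n) i.
Proof.
set m := invmx B *m ones n.
have Bm : B *m m = ones n by rewrite /m mulKVmx // (row_dominant_unit dom).
have [i0 i0_min] := exists_argmax (fun l => - m l 0) i.
suff m_i0_pos : 0 < m i0 0 by rewrite /rowdot -/m (lt_le_trans m_i0_pos) // -lerN2 i0_min.
rewrite ltNge; apply/negP => m_i0_npos.
have row_i0 : \sum_l B i0 l * m l 0 = 1.
  by have := congr1 (fun u : 'cV[F]_n => u i0 0) Bm; rewrite !mxE.
rewrite (bigD1 i0) //= in row_i0.
have off_diag : \sum_(l < n | l != i0) B i0 l * m l 0
                <= m i0 0 * \sum_(l < n | l != i0) B i0 l.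
  rewrite mulr_sumr; apply: ler_sum => l li0; rewrite [X in _ <= X]mulrC.
  apply: ler_wnM2l; first by apply/ltW/offdiag_neg; rewrite eq_sym.
  by rewrite -lerN2 i0_min.
have : B i0 i0 * m i0 0 + \sum_(l < n | l != i0) B i0 l * m l 0 <= 0.
  apply: (le_trans (_ : _ <= B i0 i0 * m i0 0 + m i0 0 * \sum_(l < n | l != i0) B i0 l)).
    by rewrite lerD2l.
  rewrite [X in X + _]mulrC -mulrDr.
  by apply: mulr_le0_ge0 => //; exact/ltW/Zmatrix_row_sum_pos.
by rewrite row_i0 ler10.
Qed.

End ZMatrix.
End RowDominance.

Section Saturation.
Context {F : realFieldType}.
Implicit Types s t v : F.

Variant sat_spec v : F -> F -> Prop :=
| SatLo of v < -1 : sat_spec v (-1) (v + 1)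
| SatMid of -1 <= v & v <= 1 : sat_spec v v 0
| SatHi of 1 < v : sat_spec v 1 (v - 1).

Lemma satP v : sat_spec v (satr v) (dzr v).
Proof.
rewrite /dzr /satr; case: (ltrP v (-1)) => [v_lt|v_ge].
  by rewrite min_l ?max_r ?opprK; [constructor|lra|lra].
case: (ltrP 1 v) => [v_gt|v_le]; first by rewrite max_l; [constructor|lra].
by rewrite max_l ?subrr //; constructor.
Qed.

Lemma satr_dzr v : satr v + dzr v = v.
Proof. by rewrite /dzr addrC subrK. Qed.

Lemma satr_bound v : -1 <= satr v <= 1.
Proof. by case: satP => *; apply/andP; split; lra. Qed.

Lemma dzr_pos_satr v : 0 < dzr v -> satr v = 1.
Proof. by case: satP => *; lra. Qed.

Lemma dzr_neg_satr v : dzr v < 0 -> satr v = -1.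
Proof. by case: satP => *; lra. Qed.

Lemma sat_dz_split s t : -1 <= s <= 1 -> (t < 0 -> s = -1) -> (0 < t -> s = 1) ->
  satr (s + t) = s /\ dzr (s + t) = t.
Proof.
move=> /andP[s_ge s_le] t_neg t_pos.
case: (ltrgtP t 0) => [t_lt|t_gt|->]; last by rewrite addr0; case: satP => *; split; lra.
  by move: (t_neg t_lt) => s_eq; case: satP => *; split; lra.
by move: (t_pos t_gt) => s_eq; case: satP => *; split; lra.
Qed.

End Saturation.

Section Reduced.
(* The scalar problem to which the equilibrium equations reduce: the data are
   a_i = M_i w and m_i = M_i 1 > 0, and (A1) says that the boxes
   [lower i, upper i] of admissible values of the common state level have a
   common point with room to spare. *)
Context {F : realFieldType} {n : nat}.
Variables (a m : 'I_n -> F) (beta : F).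
Hypothesis m_pos : forall i, 0 < m i.
Hypothesis box_overlap : forall i j, (a i - 1) / m i < (a j + 1) / m j.
Hypothesis beta_pos : 0 < beta.

Definition lower i : F := (a i - 1) / m i.
Definition upper i : F := (a i + 1) / m i.

Definition dzratio i : F := dzr (a i) / m i.
Definition maximizer k : Prop := forall j, `|dzratio j| <= `|dzratio k|.

Definition reduced_solution (u : 'I_n -> F) (c : F) : Prop :=
  (forall i, satr (u i) = c * m i - a i) /\ c = - beta * \sum_j dzr (u j).

Definition reduced_input k i : F :=
  dzratio k * m i - a i - (if i == k then dzratio k / beta else 0).

Lemma lower_lt_upper i j : lower i < upper j.
Proof. exact: box_overlap. Qed.

Lemma in_box c i : (-1 <= c * m i - a i <= 1) = (lower i <= c <= upper i).
Proof.
rewrite /lower /upper ler_pdivrMr ?ler_pdivlMr //.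
by apply/andP/andP => -[? ?]; split; lra.
Qed.

Lemma at_lower c i : (c * m i - a i = -1) <-> c = lower i.
Proof.
have mi_neq0 : m i != 0 by rewrite gt_eqF.
split=> [c_eq|->]; last by rewrite /lower divfK //; lra.
by apply: (mulIf mi_neq0); rewrite /lower divfK //; lra.
Qed.

Lemma at_upper c i : (c * m i - a i = 1) <-> c = upper i.
Proof.
have mi_neq0 : m i != 0 by rewrite gt_eqF.
split=> [c_eq|->]; last by rewrite /upper divfK //; lra.
by apply: (mulIf mi_neq0); rewrite /upper divfK //; lra.
Qed.

Variant dzratio_spec i : F -> Prop :=
| DzLower of 0 < lower i : dzratio_spec i (lower i)
| DzZero of lower i <= 0 & 0 <= upper i : dzratio_spec i 0
| DzUpper of upper i < 0 : dzratio_spec i (upper i).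

Lemma dzratioP i : dzratio_spec i (dzratio i).
Proof.
have mi := m_pos i; rewrite /dzratio; case: (satP (a i)) => [a_lt|a_ge a_le|a_gt].
- by apply: DzUpper; rewrite /upper ltr_pdivrMr // mul0r; lra.
- by rewrite mul0r; apply: DzZero; rewrite ?ler_pdivrMr ?ler_pdivlMr // mul0r; lra.
- by apply: DzLower; rewrite /lower ltr_pdivlMr // mul0r; lra.
Qed.

Lemma maximizer_in_box k : maximizer k -> forall i, lower i <= dzratio k <= upper i.
Proof.
move=> k_max i.
have di_le : dzratio i <= `|dzratio k| := le_trans (ler_norm _) (k_max i).
have di_ge : - dzratio i <= `|dzratio k|.
  by apply: le_trans (ler_norm _) _; rewrite normrN k_max.
have := lower_lt_upper i i; have := lower_lt_upper i k; have := lower_lt_upper k i.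
move: di_le di_ge; case: (dzratioP k) => [lk|lk uk|uk];
  [rewrite gtr0_norm // | rewrite normr0 | rewrite ltr0_norm //];
  by case: (dzratioP i) => *; apply/andP; split; lra.
Qed.

Lemma reduced_existence k : maximizer k -> reduced_solution (reduced_input k) (dzratio k).
Proof.
move=> k_max; have inv_beta : 0 < beta^-1 by rewrite invr_gt0.
have on_edge : (0 < dzratio k -> dzratio k * m k - a k = -1) /\
               (dzratio k < 0 -> dzratio k * m k - a k = 1).
  by case: (dzratioP k) => *; split=> ?; try lra; [apply/at_lower | apply/at_upper].
have split_input i : satr (reduced_input k i) = dzratio k * m i - a i /\
    dzr (reduced_input k i) = - (if i == k then dzratio k / beta else 0).
  apply: sat_dz_split; first by rewrite in_box maximizer_in_box.
  - case: eqVneq => [->|_]; last by rewrite oppr0 ltxx.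
    by rewrite oppr_lt0 pmulr_lgt0 //; exact: on_edge.1.
  - case: eqVneq => [->|_]; last by rewrite oppr0 ltxx.
    by rewrite oppr_gt0 pmulr_llt0 //; exact: on_edge.2.
split=> [i|]; first exact: (split_input i).1.
rewrite (bigD1 k) //= big1 => [|j jk]; last by rewrite (split_input j).2 (negbTE jk) oppr0.
by rewrite (split_input k).2 eqxx; field; rewrite gt_eqF.
Qed.

Section Uniqueness.
Context {u : 'I_n -> F} {c : F}.
Hypothesis sat_u : forall i, satr (u i) = c * m i - a i.
Hypothesis level_u : c = - beta * \sum_j dzr (u j).

Lemma solution_in_box i : lower i <= c <= upper i.
Proof. by rewrite -in_box -sat_u satr_bound. Qed.

Lemma dz_pos_upper {i} : 0 < dzr (u i) -> c = upper i.
Proof. by move=> /dzr_pos_satr; rewrite sat_u => /at_upper. Qed.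

Lemma dz_neg_lower {i} : dzr (u i) < 0 -> c = lower i.
Proof. by move=> /dzr_neg_satr; rewrite sat_u => /at_lower. Qed.

(* By (A1) no two dead zones have opposite signs. *)
Lemma dz_no_opposite {i j} : 0 < dzr (u i) -> dzr (u j) < 0 -> False.
Proof.
move=> /dz_pos_upper c_up /dz_neg_lower c_lo.
by have := lower_lt_upper j i; rewrite -c_up -c_lo ltxx.
Qed.

Lemma level_neg {i} : 0 < dzr (u i) -> c < 0.
Proof.
move=> dzi; rewrite level_u mulNr oppr_lt0; apply: mulr_gt0 => //.
rewrite (bigD1 i) //=; apply: (lt_le_trans dzi); rewrite lerDl.
by apply: sumr_ge0 => j _; rewrite leNgt; apply/negP => /(dz_no_opposite dzi).
Qed.

Lemma level_pos {i} : dzr (u i) < 0 -> 0 < c.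
Proof.
move=> dzi; rewrite level_u mulNr oppr_gt0 pmulr_rlt0 //.
rewrite (bigD1 i) //=; apply: (le_lt_trans _ dzi); rewrite gerDl.
by apply: sumr_le0 => j _; rewrite leNgt; apply/negP => /dz_no_opposite /(_ dzi).
Qed.

Lemma dzratio_of_active {i} : dzr (u i) != 0 -> dzratio i = c.
Proof.
have /andP[lo_c c_up] := solution_in_box i.
case: (ltrgtP (dzr (u i)) 0) => // [dz_neg|dz_pos] _.
- have := level_pos dz_neg; have := dz_neg_lower dz_neg.
  by case: (dzratioP i) => *; lra.
- have := level_neg dz_pos; have := dz_pos_upper dz_pos.
  by case: (dzratioP i) => *; lra.
Qed.

Lemma dzratio_between l : (0 < dzratio l -> dzratio l <= c) /\ (dzratio l < 0 -> c <= dzratio l).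
Proof.
have /andP[lo_c c_up] := solution_in_box l.
by case: (dzratioP l) => *; split=> ?; lra.
Qed.

Lemma inactive_of_level0 {i} : c = 0 -> dzr (u i) = 0.
Proof.
move=> c0; case: (ltrgtP (dzr (u i)) 0) => // dzi;
  [have := level_pos dzi | have := level_neg dzi]; lra.
Qed.

Lemma exists_active : c != 0 -> exists i, dzr (u i) != 0.
Proof.
move=> c_neq0; case: (pickP (fun i => dzr (u i) != 0)) => [i act|none]; first by exists i.
move/eqP: c_neq0; rewrite level_u big1 ?mulr0 // => i _.
by apply/eqP; move: (none i) => /negbFE.
Qed.

Lemma maximizer_level {k} : maximizer k -> dzratio k = c.
Proof.
move=> k_max; have [dk_pos dk_neg] := dzratio_between k.
have [c0|c_neq0] := eqVneq c 0.
  by rewrite c0 in dk_pos dk_neg *; case: (ltrgtP (dzratio k) 0) => dk;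
    [have := dk_neg dk | have := dk_pos dk |]; lra.
have [i /dzratio_of_active di] := exists_active c_neq0.
have := k_max i; rewrite di.
case: (ltrgtP (dzratio k) 0) => [dk|dk|->]; last by rewrite normr0 normr_le0 (negbTE c_neq0).
- have c_neg : c < 0 by have := dk_neg dk; lra.
  by rewrite (ltr0_norm dk) (ltr0_norm c_neg) => ?; have := dk_neg dk; lra.
- have c_pos : 0 < c by have := dk_pos dk; lra.
  by rewrite (gtr0_norm dk) (gtr0_norm c_pos) => ?; have := dk_pos dk; lra.
Qed.

End Uniqueness.

Lemma reduced_uniqueness k u c : maximizer k ->
  (forall i, dzr (a i) = 0) \/ (forall i, maximizer i -> i = k) ->
  reduced_solution u c -> c = dzratio k /\ forall i, u i = reduced_input k i.
Proof.
move=> k_max A2 [sat_u level_u].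
have dk := maximizer_level sat_u level_u k_max.
have inactive i : i != k -> dzr (u i) = 0.
  move=> ik; apply/eqP; apply: contraT => active.
  have di := dzratio_of_active sat_u level_u active.
  case: A2 => [all0|uniq_max].
  - have c0 : c = 0 by rewrite -dk /dzratio all0 mul0r.
    by move: active; rewrite (inactive_of_level0 sat_u level_u c0) eqxx.
  - by move: ik; rewrite (uniq_max i) ?eqxx // => j; rewrite di -dk.
have dz_k : dzr (u k) = - (c / beta).
  have sum_k : \sum_j dzr (u j) = dzr (u k).
    by rewrite (bigD1 k) //= big1 ?addr0 // => j /inactive.
  by rewrite level_u sum_k; field; rewrite gt_eqF.
split=> [|i]; first by rewrite dk.
rewrite /reduced_input dk -(sat_u i) -{1}(satr_dzr (u i)).
by case: eqVneq => [->|ik]; [rewrite dz_k | rewrite inactive // oppr0].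
Qed.

End Reduced.
Arguments reduced_existence {F n a m beta} m_pos box_overlap beta_pos {k}.
Arguments reduced_uniqueness {F n a m beta} m_pos box_overlap beta_pos {k u c}.

Section Equilibria.
Context {F : realFieldType} {n : nat} {B P R : 'M[F]_n} {beta : F} {w : 'cV[F]_n}.
Hypothesis B_unit : B \in unitmx.
Hypothesis R_unit : R \in unitmx.

Let a := rowdot (invmx B) w.
Let m := rowdot (invmx B) (ones n).

Lemma ones_outer_mul (v : 'cV[F]_n) : ones n *m (ones n)^T *m v = (\sum_j v j 0) *: ones n.
Proof.
apply/matrixP => i j; rewrite ord1 !mxE mulr1; apply: eq_bigr => l _.
by rewrite !mxE big_ord1 !mxE !mul1r.
Qed.

Lemma inv_apply_entry c i : (invmx B *m (c *: ones n - w)) i 0 = c * m i - a i.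
Proof. by rewrite mulmxBr -scalemxAr /m /a /rowdot !mxE. Qed.

Lemma state_of_input (x z u : 'cV[F]_n) :
  - (P *m x) - (R *m z) = u <-> z = - (invmx R *m (u + P *m x)).
Proof.
split=> [<-|->]; first by rewrite addrAC addNr add0r mulmxN opprK mulKmx.
by rewrite mulmxN mulKVmx // opprK addrCA addNr addr0.
Qed.

Lemma equilibrium_reduced (x z : 'cV[F]_n) :
  is_equilibrium B P R beta w x z <->
  exists c, x = c *: ones n /\
    reduced_solution a m beta (fun i => (- (P *m x) - (R *m z)) i 0) c.
Proof.
rewrite /is_equilibrium; set u := - (P *m x) - (R *m z).
have x_eq : (0 = x + beta *: (ones n *m (ones n)^T *m dz u)) <->
            x = (- beta * \sum_j dzr (u j 0)) *: ones n.
  rewrite ones_outer_mul scalerA mulNr scaleNr.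
  have -> : \sum_j dz u j 0 = \sum_j dzr (u j 0) by apply: eq_bigr => j _; rewrite mxE.
  by split=> [/esym/eqP|->]; [rewrite addr_eq0 => /eqP | rewrite addNr].
have sat_eq c : x = c *: ones n -> (0 = - x + B *m sat u + w) <->
                (forall i, satr (u i 0) = c * m i - a i).
  move=> ->; split=> [e i|sat_u].
    have sat_u : sat u = invmx B *m (c *: ones n - w).
      rewrite -[sat u](mulKmx B_unit); congr (_ *m _).
      by apply/matrixP => i' j; have := congr1 (fun X : 'cV[F]_n => X i' j) e;
         rewrite !mxE => ?; lra.
    by have := congr1 (fun X : 'cV[F]_n => X i 0) sat_u; rewrite mxE inv_apply_entry.
  have -> : sat u = invmx B *m (c *: ones n - w).
    by apply/matrixP => i j; rewrite ord1 inv_apply_entry mxE sat_u.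
  by rewrite mulKVmx // addKr addNr.
split=> [[e_x e_z]|[c [x_c [sat_u level_u]]]].
  have x_c := x_eq.1 e_z; exists (- beta * \sum_j dzr (u j 0)).
  by split=> //; split=> //; apply/(sat_eq _ x_c).
split; first exact/(sat_eq c x_c).
by apply/x_eq; rewrite x_c -level_u.
Qed.

Lemma u0_reduced_input k : 0 < m k -> 0 < beta ->
  u0_of (invmx B) beta w k = \col_i reduced_input a m beta k i.
Proof.
move=> mk_pos beta_pos; apply/matrixP => i j; rewrite ord1 !mxE /reduced_input /dzratio -/a -/m.
have sat_a : satr (a k) = a k - dzr (a k) by rewrite /dzr opprB addrC subrK.
case: eqVneq => [->|ik]; first by rewrite sat_a; field; rewrite !gt_eqF.
by field; rewrite gt_eqF.
Qed.

Section Maximizer.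
Hypothesis m_pos : forall i, 0 < m i.
Hypothesis box_overlap : forall i j, (a i - 1) / m i < (a j + 1) / m j.
Hypothesis beta_pos : 0 < beta.
Context {k : 'I_n}.
Hypothesis k_max : maximizer a m k.
Hypothesis A2 : (forall i, dzr (a i) = 0) \/ (forall i, maximizer a m i -> i = k).

Let x0 := x0_of (invmx B) w k.
Let z0 := z0_of (invmx B) P R beta w k.

Lemma input_at_z0 : - (P *m x0) - (R *m z0) = \col_i reduced_input a m beta k i.
Proof. by rewrite -u0_reduced_input //; apply/state_of_input. Qed.

Lemma maximizer_equilibrium : is_equilibrium B P R beta w x0 z0.
Proof.
apply/equilibrium_reduced; exists (dzratio a m k); split=> //.
have [sat_r level_r] := reduced_existence m_pos box_overlap beta_pos k_max.
rewrite input_at_z0; split=> [i|]; first by rewrite mxE sat_r.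
by rewrite level_r; congr (_ * _); apply: eq_bigr => j _; rewrite mxE.
Qed.

Lemma maximizer_equilibrium_unique (x z : 'cV[F]_n) :
  is_equilibrium B P R beta w x z -> x = x0 /\ z = z0.
Proof.
move=> /equilibrium_reduced [c [x_c sol]].
have [c_eq u_eq] := reduced_uniqueness m_pos box_overlap beta_pos k_max A2 sol.
have x_eq : x = x0 by rewrite x_c c_eq.
split=> //; rewrite /z0 /z0_of -/x0 -x_eq; apply/state_of_input.
rewrite u0_reduced_input //.
by apply/matrixP => i j; rewrite ord1 [RHS]mxE u_eq.
Qed.

End Maximizer.
End Equilibria.

Theorem lemma2 (F : realFieldType) (n : nat) (hn : (0 < n)%N)
  (B P R : 'M[F]_n) (beta : F) (w : 'cV[F]_n) :
  strictly_row_dominant B ->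
  (forall i : 'I_n, 0 < B i i) ->
  (forall i j : 'I_n, i != j -> B i j < 0) ->
  is_diag_mx P -> (forall i : 'I_n, 0 < P i i) ->
  is_diag_mx R -> (forall i : 'I_n, 0 < R i i) ->
  0 < beta ->
  let M := invmx B in
  (* (A1): max_i (M_i w - 1)/(M_i 1) < min_j (M_j w + 1)/(M_j 1) *)
  (forall i j : 'I_n,
     (rowdot M w i - 1) / rowdot M (ones n) i < (rowdot M w j + 1) / rowdot M (ones n) j) ->
  (* (A2) *)
  (dz (M *m w) = 0 \/ exists k : 'I_n, argmaxK M w = [set k]) ->
  (exists! xz : 'cV[F]_n * 'cV[F]_n, is_equilibrium B P R beta w xz.1 xz.2) /\
  (forall k : 'I_n, k \in argmaxK M w ->
     is_equilibrium B P R beta w (x0_of M w k) (z0_of M P R beta w k) /\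
     (forall x z : 'cV[F]_n, is_equilibrium B P R beta w x z ->
        x = x0_of M w k /\ z = z0_of M P R beta w k)).
Proof.
move=> dom diag_pos offdiag_neg _ _ R_diag R_pos beta_pos M A1 A2.
have B_unit := row_dominant_unit dom.
have R_unit := row_dominant_unit (pos_diag_row_dominant R_diag R_pos).
have m_pos := Zmatrix_inv_ones_pos dom diag_pos offdiag_neg.
pose a := rowdot M w; pose m := rowdot M (ones n).
have in_K k : k \in argmaxK M w <-> maximizer a m k by rewrite inE; split=> /forallP.
have A2_at k : k \in argmaxK M w ->
    (forall i, dzr (a i) = 0) \/ (forall i, maximizer a m i -> i = k).
  case: A2 => [dz0|[k' K_eq]] k_in; [left=> i | right=> i /in_K].
    by have := congr1 (fun v : 'cV[F]_n => v i 0) dz0; rewrite [LHS]mxE [RHS]mxE.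
  by rewrite K_eq inE => /eqP ->; move: k_in; rewrite K_eq inE => /eqP.
have at_K k : k \in argmaxK M w ->
    is_equilibrium B P R beta w (x0_of M w k) (z0_of M P R beta w k) /\
    (forall x z, is_equilibrium B P R beta w x z ->
       x = x0_of M w k /\ z = z0_of M P R beta w k).
  move=> k_in; have k_max := (in_K k).1 k_in.
  split; first exact: (maximizer_equilibrium B_unit R_unit m_pos A1 beta_pos k_max).
  exact: (maximizer_equilibrium_unique B_unit R_unit m_pos A1 beta_pos k_max (A2_at k k_in)).
split=> //.
have [k k_max] := exists_argmax (fun i => `|dzratio a m i|) (Ordinal hn).
have [eq_k uniq_k] := at_K k ((in_K k).2 k_max).
by exists (x0_of M w k, z0_of M P R beta w k); split=> // -[x z] /= /uniq_k [-> ->].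
Qed.
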